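(* Let $f$ be an expansive Lorenz map with critical point $c$ and $H=(a,b)$ a hole with $a\le c\le b$, $a\ne b$. If $\tilde S^+_f(a,b)\not\subseteq\{0^\infty,1^\infty\}$ and the pair $(\mathbf b,\mathbf a)$ is not weak-admissible, then there exist $s,t\in\{0,1\}^{\mathbb N}$ such that $(1s,0t)$ is weak-admissible and $\Omega(1s,0t)=\tilde S^+_f(a,b)$.
   Context: Lorenz map: $f:[0,1]\to[0,1]$ with $c\in(0,1)$, $f$ strictly increasing on $[0,c)$ and $(c,1]$, $\lim_{x\uparrow c}f=1$, $\lim_{x\downarrow c}f=0$; expansive if $\bigcup_{n\ge0}f^{-n}(c)$ is dense. $\preceq$ is the lexicographic order on $\{0,1\}^{\mathbb N}$, $\sigma$ the left shift. Kneading sequences $\tau_f(x)=\epsilon_0\epsilon_1\cdots$ ($\epsilon_i=0$ if $f^i(x)<c$, $1$ if $f^i(x)>c$), and $\tau_f(x\pm)=\lim_{y\to x^\pm}\tau_f(y)$ over non-preimages $y$ of $c$. Put $\mathbf a=\tau_f(a-)$, $\mathbf b=\tau_f(b+)$, $\tilde S^+_f(a,b)=\{w: \sigma(\mathbf b)\preceq\sigma^n(w)\preceq\sigma(\mathbf a)\ \forall n\ge0\}$, and $\Omega(1s,0t)=\{w:s\preceq\sigma^n(w)\preceq t\ \forall n\ge0\}$. A pair $(k_+,k_-)$ of sequences is weak-admissible if $\sigma(k_+)\preceq\sigma^n(k_+)\preceq\sigma(k_-)$ and $\sigma(k_+)\preceq\sigma^n(k_-)\preceq\sigma(k_-)$ for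 all $n\ge0$. *)

(* concrete reals R; binary sequences as nat -> bool
   (false = 0, true = 1). *)
From Stdlib Require Import Reals Lra.
Open Scope R_scope.

Definition lorenz_map (f : R -> R) (c : R) : Prop :=
  0 < c < 1 /\
  (forall x, 0 <= x <= 1 -> 0 <= f x <= 1) /\
  (forall x y, 0 <= x -> x < y -> y < c -> f x < f y) /\
  (forall x y, c < x -> x < y -> y <= 1 -> f x < f y) /\
  (forall eps, 0 < eps -> exists delta, 0 < delta /\
      forall x, c - delta < x < c -> Rabs (f x - 1) < eps) /\
  (forall eps, 0 < eps -> exists delta, 0 < delta /\
      forall x, c < x < c + delta -> Rabs (f x - 0) < eps).

Definition preimage_of_c (f : R -> R) (c y : R) : Prop :=
  exists n : nat, Nat.iter n f y = c.

Definition expansive (f : R -> R) (c : R) : Prop :=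
  forall x y, 0 <= x -> x < y -> y <= 1 ->
    exists z, x < z < y /\ preimage_of_c f c z.

Definition bseq := nat -> bool.

(** Kneading sequence of a point (meaningful for non-preimages of c). *)
Definition kneading (f : R -> R) (c x : R) : bseq :=
  fun i => if Rlt_dec (Nat.iter i f x) c then false else true.

(** w = tau_f(x-) : limit (product topology) of tau_f(y) as y -> x from the
    left, y ranging over points of [0,1] that are not preimages of c. *)
Definition left_kneading (f : R -> R) (c x : R) (w : bseq) : Prop :=
  forall N : nat, exists delta, 0 < delta /\
    forall y, x - delta < y < x -> 0 <= y -> ~ preimage_of_c f c y ->
      forall i, (i < N)%nat -> kneading f c y i = w i.

Definition right_kneading (f : R -> R) (c x : R) (w : bseq) : Prop :=
  forall N : nat, exists delta, 0 < delta /\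
    forall y, x < y < x + delta -> y <= 1 -> ~ preimage_of_c f c y ->
      forall i, (i < N)%nat -> kneading f c y i = w i.

Definition shift (w : bseq) : bseq := fun i => w (S i).
Definition shiftn (n : nat) (w : bseq) : bseq := fun i => w (n + i)%nat.
Definition bcons (b : bool) (w : bseq) : bseq :=
  fun i => match i with O => b | S j => w j end.

Definition lex_lt (w v : bseq) : Prop :=
  exists n, (forall i, (i < n)%nat -> w i = v i) /\ w n = false /\ v n = true.
Definition lex_le (w v : bseq) : Prop := (forall i, w i = v i) \/ lex_lt w v.

(** S~^+_f(a,b), with ka = tau_f(a-), kb = tau_f(b+) *)
Definition S_tilde (ka kb : bseq) (w : bseq) : Prop :=
  forall n, lex_le (shift kb) (shiftn n w) /\ lex_le (shiftn n w) (shift ka).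

Definition Omega (s t : bseq) (w : bseq) : Prop :=
  forall n, lex_le s (shiftn n w) /\ lex_le (shiftn n w) t.

Definition weak_admissible (kp km : bseq) : Prop :=
  forall n,
    (lex_le (shift kp) (shiftn n kp) /\ lex_le (shiftn n kp) (shift km)) /\
    (lex_le (shift kp) (shiftn n km) /\ lex_le (shiftn n km) (shift km)).

Definition zero_inf : bseq := fun _ => false.
Definition one_inf : bseq := fun _ => true.

(* The set S~ := S~^+_f(a,b) is shift-invariant and closed in the product
   topology, so it has a lexicographically least element s and a greatest
   element t.  Every shift of every w in S~ lies in S~, hence between s and t;
   conversely s and t themselves satisfy the two defining bounds of S~, so
   S~ = Omega(s,t).  Since S~ contains a sequence other than 0^oo and 1^oo,
   s starts with 0 and t with 1, and then (1s,0t) is weak-admissible because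
   all shifts of s and t lie in [s,t]. *)

From Stdlib Require Import Reals Lia Wf_nat Bool Classical ClassicalEpsilon
  FunctionalExtensionality.
Open Scope R_scope.

Lemma lex_lt_not_ge w v : lex_lt w v -> ~ lex_le v w.
Proof.
  intros [n [Hpre [Hw Hv]]] [Heq | [m [Hpre' [Hv' Hw']]]].
  - rewrite Heq in Hv. congruence.
  - destruct (Nat.lt_trichotomy m n) as [Hlt | [-> | Hgt]].
    + rewrite Hpre in Hw' by exact Hlt. congruence.
    + congruence.
    + rewrite Hpre' in Hv by exact Hgt. congruence.
Qed.

Lemma lex_le_or_gt w v : lex_le w v \/ lex_lt v w.
Proof.
  destruct (classic (forall i, w i = v i)) as [Heq | Hneq]; [now left; left |].
  destruct (dec_inh_nat_subset_has_unique_least_element (fun i => w i <> v i))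
    as [i [[Hi Hleast] _]].
  - intro i; apply classic.
  - now apply not_all_ex_not.
  - assert (Hpre : forall j, (j < i)%nat -> w j = v j).
    { intros j Hj. apply NNPP. intro Hj'. specialize (Hleast j Hj'). lia. }
    destruct (w i) eqn:Ew, (v i) eqn:Ev; try congruence.
    + right. exists i. split; [intros j Hj; symmetry; auto | auto].
    + left; right. exists i. auto.
Qed.

Lemma lex_lt_trans u v w : lex_lt u v -> lex_lt v w -> lex_lt u w.
Proof.
  intros [n [Huv [Hu Hv]]] [m [Hvw [Hv' Hw]]].
  destruct (Nat.lt_trichotomy n m) as [Hlt | [-> | Hgt]].
  - exists n. repeat split; auto.
    + intros i Hi. rewrite Huv by exact Hi. apply Hvw. lia.
    + rewrite <- Hvw by exact Hlt. exact Hv.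
  - congruence.
  - exists m. repeat split; auto.
    + intros i Hi. rewrite Huv by lia. apply Hvw, Hi.
    + rewrite Huv by exact Hgt. exact Hv'.
Qed.

Lemma lex_le_trans u v w : lex_le u v -> lex_le v w -> lex_le u w.
Proof.
  intros [Huv | Huv] [Hvw | Hvw].
  - left. intro i. now rewrite Huv.
  - right. destruct Hvw as [n [Hpre Hn]]. exists n.
    rewrite !Huv. split; [intros i Hi; rewrite Huv; auto | exact Hn].
  - right. destruct Huv as [n [Hpre Hn]]. exists n.
    rewrite <- !Hvw. split; [intros i Hi; rewrite <- Hvw; auto | exact Hn].
  - right. eapply lex_lt_trans; eassumption.
Qed.

Definition agree (N : nat) (u v : bseq) : Prop :=
  forall i, (i < N)%nat -> u i = v i.

Lemma lex_ge_of_approx z w :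
  (forall N, exists v, agree N v w /\ lex_le z v) -> lex_le z w.
Proof.
  intros Happrox. destruct (lex_le_or_gt z w) as [| [m [Hpre [Hw Hz]]]]; auto.
  destruct (Happrox (S m)) as [v [Hvw Hzv]]. exfalso.
  apply (lex_lt_not_ge v z); auto.
  exists m. rewrite !Hvw by lia.
  split; [intros i Hi; rewrite Hvw by lia; auto | auto].
Qed.

Lemma lex_le_of_approx z w :
  (forall N, exists v, agree N v w /\ lex_le v z) -> lex_le w z.
Proof.
  intros Happrox. destruct (lex_le_or_gt w z) as [| [m [Hpre [Hz Hw]]]]; auto.
  destruct (Happrox (S m)) as [v [Hvw Hvz]]. exfalso.
  apply (lex_lt_not_ge z v); auto.
  exists m. rewrite !Hvw by lia.
  split; [intros i Hi; rewrite Hvw by lia; auto | auto].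
Qed.

Definition closed_set (X : bseq -> Prop) : Prop :=
  forall w, (forall N, exists v, X v /\ agree N v w) -> X w.

Definition shift_invariant (X : bseq -> Prop) : Prop :=
  forall n w, X w -> X (shiftn n w).

Section LexMinimum.

Variable X : bseq -> Prop.
Hypothesis X_closed : closed_set X.

(* [greedy_min w0 n] is an element of X whose first n bits are the first n
   bits of the least element of X: at step n it switches, if possible, to an
   element of X with the same n-prefix and a 0 in position n. *)
Fixpoint greedy_min (w0 : bseq) (n : nat) : bseq :=
  match n with
  | O => w0
  | S n =>
      match excluded_middle_informative
              (exists w, X w /\ agree n w (greedy_min w0 n) /\ w n = false) with
      | left H => proj1_sig (constructive_indefinite_description _ H)
      | right _ => greedy_min w0 n
      end
  end.

Lemma greedy_min_in w0 : X w0 -> forall n, X (greedy_min w0 n).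
Proof.
  intros Hw0 n. induction n as [| n IH]; simpl; auto.
  destruct excluded_middle_informative as [H | _]; auto.
  exact (proj1 (proj2_sig (constructive_indefinite_description _ H))).
Qed.

Lemma greedy_min_agree w0 n m :
  (n <= m)%nat -> agree n (greedy_min w0 m) (greedy_min w0 n).
Proof.
  induction 1 as [| m Hnm IH]; [intros i _; reflexivity |].
  intros i Hi. rewrite <- IH by exact Hi. simpl.
  destruct excluded_middle_informative as [H | _]; [| reflexivity].
  destruct (proj2_sig (constructive_indefinite_description _ H)) as [_ [Hagree _]].
  apply Hagree. lia.
Qed.

Lemma lex_min_exists w0 : X w0 -> exists s, X s /\ forall w, X w -> lex_le s w.
Proof.
  intros Hw0.
  set (s := fun i => greedy_min w0 (S i) i).
  assert (Hs : forall n, agree n s (greedy_min w0 n)).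
  { intros n i Hi. symmetry. apply (greedy_min_agree w0 (S i) n); lia. }
  exists s. split.
  - apply X_closed. intro N. exists (greedy_min w0 N).
    split; [apply greedy_min_in, Hw0 |].
    intros i Hi. symmetry. apply Hs, Hi.
  - intros w Hw. destruct (lex_le_or_gt s w) as [| [m [Hpre [Hwm Hsm]]]]; auto.
    exfalso. unfold s in Hsm. simpl in Hsm.
    destruct excluded_middle_informative as [H | Hno].
    + destruct (proj2_sig (constructive_indefinite_description _ H)) as [_ [_ E]].
      congruence.
    + apply Hno. exists w. repeat split; auto.
      intros i Hi. rewrite Hpre by exact Hi. apply Hs, Hi.
Qed.

End LexMinimum.

Definition negs (w : bseq) : bseq := fun i => negb (w i).

Lemma negs_involutive w : negs (negs w) = w.
Proof. apply functional_extensionality. intro i. apply negb_involutive. Qed.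

Lemma lex_le_negs u v : lex_le u v -> lex_le (negs v) (negs u).
Proof.
  unfold negs. intros [Heq | [n [Hpre [Hu Hv]]]].
  - left. intro i. now rewrite Heq.
  - right. exists n. rewrite Hu, Hv.
    split; [intros i Hi; now rewrite Hpre | auto].
Qed.

Lemma lex_max_exists X w0 : closed_set X -> X w0 ->
  exists t, X t /\ forall w, X w -> lex_le w t.
Proof.
  intros HX Hw0.
  destruct (lex_min_exists (fun w => X (negs w))) with (w0 := negs w0)
    as [m [Hm Hmin]].
  - intros w Hw. apply HX. intro N. destruct (Hw N) as [v [Hv Hvw]].
    exists (negs v). split; [exact Hv |].
    intros i Hi. unfold negs. now rewrite Hvw.
  - now rewrite negs_involutive.
  - exists (negs m). split; [exact Hm |]. intros w Hw.
    rewrite <- (negs_involutive w). apply lex_le_negs, Hmin.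
    now rewrite negs_involutive.
Qed.

Lemma shiftn_add n m w : shiftn m (shiftn n w) = shiftn (n + m) w.
Proof. apply functional_extensionality. intro i. unfold shiftn. f_equal. lia. Qed.

Lemma S_tilde_shift_invariant ka kb : shift_invariant (S_tilde ka kb).
Proof. intros n w Hw m. rewrite shiftn_add. apply Hw. Qed.

Lemma S_tilde_closed ka kb : closed_set (S_tilde ka kb).
Proof.
  intros w Happrox n.
  assert (Hshift : forall N, exists v, S_tilde ka kb v /\ agree N (shiftn n v) (shiftn n w)).
  { intro N. destruct (Happrox (n + N)%nat) as [v [Hv Hvw]].
    exists v. split; [exact Hv |]. intros i Hi. apply Hvw. lia. }
  split.
  - apply lex_ge_of_approx. intro N. destruct (Hshift N) as [v [Hv Hvw]].
    exists (shiftn n v). split; [exact Hvw | apply Hv].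
  - apply lex_le_of_approx. intro N. destruct (Hshift N) as [v [Hv Hvw]].
    exists (shiftn n v). split; [exact Hvw | apply Hv].
Qed.

Section ShiftInvariantExtrema.

Variables (X : bseq -> Prop) (s t : bseq).
Hypothesis X_shift : shift_invariant X.
Hypothesis s_least : forall w, X w -> lex_le s w.
Hypothesis t_greatest : forall w, X w -> lex_le w t.

Lemma Omega_of_shift_invariant w : X w -> Omega s t w.
Proof. intros Hw n. split; [apply s_least | apply t_greatest]; apply X_shift, Hw. Qed.

(* If s started with 1, every bit of every w in X would be 1. *)
Lemma least_head_false w : X w -> w <> one_inf -> s O = false.
Proof.
  intros Hw Hw1. destruct (s O) eqn:Es; [exfalso | reflexivity].
  apply Hw1, functional_extensionality. intro i. unfold one_inf.
  destruct (w i) eqn:Ewi; [reflexivity | exfalso].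
  apply (lex_lt_not_ge (shiftn i w) s).
  - exists O. split; [intros; lia |]. unfold shiftn. now rewrite Nat.add_0_r.
  - apply s_least, X_shift, Hw.
Qed.

Lemma greatest_head_true w : X w -> w <> zero_inf -> t O = true.
Proof.
  intros Hw Hw0. destruct (t O) eqn:Et; [reflexivity | exfalso].
  apply Hw0, functional_extensionality. intro i. unfold zero_inf.
  destruct (w i) eqn:Ewi; [exfalso | reflexivity].
  apply (lex_lt_not_ge t (shiftn i w)).
  - exists O. split; [intros; lia |]. unfold shiftn. now rewrite Nat.add_0_r.
  - apply t_greatest, X_shift, Hw.
Qed.

End ShiftInvariantExtrema.

Lemma bcons_head_shift w : w = bcons (w O) (shift w).
Proof. apply functional_extensionality. now intros [| i]. Qed.

Lemma lex_le_bcons b u v : lex_le u v -> lex_le (bcons b u) (bcons b v).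
Proof.
  intros [Heq | [n [Hpre Hn]]].
  - left. intros [| i]; [reflexivity | apply Heq].
  - right. exists (S n). split; [| exact Hn].
    intros [| i] Hi; [reflexivity |]. apply Hpre. lia.
Qed.

Lemma lex_le_bcons_false_true u v : lex_le (bcons false u) (bcons true v).
Proof. right. exists O. split; [intros; lia | auto]. Qed.

Lemma weak_admissible_bcons s t :
  s O = false -> t O = true -> Omega s t s -> Omega s t t ->
  weak_admissible (bcons true s) (bcons false t).
Proof.
  intros Hs0 Ht1 Hs Ht [| m].
  - change (shiftn 0 ?w) with w. change (shift (bcons _ ?w)) with w.
    assert (Es : s = bcons false (shift s)) by (rewrite <- Hs0; apply bcons_head_shift).
    assert (Et : t = bcons true (shift t)) by (rewrite <- Ht1; apply bcons_head_shift).
    repeat split.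
    + rewrite Es at 1. apply lex_le_bcons_false_true.
    + rewrite Et. apply lex_le_bcons, (Ht 1%nat).
    + rewrite Es at 1. apply lex_le_bcons, (Hs 1%nat).
    + rewrite Et at 2. apply lex_le_bcons_false_true.
  - change (shiftn (S m) (bcons _ ?w)) with (shiftn m w).
    change (shift (bcons _ ?w)) with w.
    repeat split; apply Hs || apply Ht.
Qed.

Theorem lemma3p4 (f : R -> R) (c a b : R) (ka kb : bseq) :
  lorenz_map f c -> expansive f c ->
  0 < a -> a <= c -> c <= b -> b < 1 -> a <> b ->
  left_kneading f c a ka -> right_kneading f c b kb ->
  (exists w, S_tilde ka kb w /\ w <> zero_inf /\ w <> one_inf) ->
  ~ weak_admissible kb ka ->
  exists s t : bseq,
    weak_admissible (bcons true s) (bcons false t) /\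
    (forall w, Omega s t w <-> S_tilde ka kb w).
Proof.
  intros _ _ _ _ _ _ _ _ _ [w0 [Hw0 [Hw0_zero Hw0_one]]] _.
  pose proof (S_tilde_shift_invariant ka kb) as Hshift.
  destruct (lex_min_exists _ (S_tilde_closed ka kb) w0 Hw0) as [s [Hs Hs_least]].
  destruct (lex_max_exists _ w0 (S_tilde_closed ka kb) Hw0) as [t [Ht Ht_greatest]].
  pose proof (Omega_of_shift_invariant _ _ _ Hshift Hs_least Ht_greatest) as HOmega.
  exists s, t. split.
  - apply weak_admissible_bcons; auto.
    + exact (least_head_false _ _ Hshift Hs_least w0 Hw0 Hw0_one).
    + exact (greatest_head_true _ _ Hshift Ht_greatest w0 Hw0 Hw0_zero).
  - intro w. split; [| apply HOmega].
    intros Hw n. split.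
    + apply (lex_le_trans _ s); [apply (Hs O) | apply Hw].
    + apply (lex_le_trans _ t); [apply Hw | apply (Ht O)].
Qed.
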